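(* Suppose that each of the equations $\partial_{\overline z}W=aW+b\overline W$ and $\partial_{\overline z}V=-aV-\overline b\,\overline V$ possesses a Cauchy kernel in $\mathbb C_j$ behaving like $\mathcal O(|z|^{-1})$ as $z\to\infty$. Then such Cauchy kernels are unique (for each of the two equations there is only one Cauchy kernel in $\mathbb C_j$ behaving like $\mathcal O(|z|^{-1})$ as $z\to\infty$).
   Context: Bicomplex numbers: $i,j$ imaginary units, $i^2=j^2=-1$, $ij=ji$; $\mathbb C_i=\{a+ib\}$, $\mathbb C_j=\{a+jb\}$ ($a,b$ real); $\mathbb B=\{u+jv:u,v\in\mathbb C_i\}$, $\overline{u+jv}=u-jv$. Plane $=\mathbb C_j$, $z=x+jy$, $\partial_{\overline z}=\frac12(\partial_x+j\partial_y)$. Norm: with $W^\pm=\operatorname{Sc}W\mp i\operatorname{Vec}W$, $|W|=\frac12(|W^+|+|W^-|)$; $\mathcal O(|z|^{-1})$ means $|z||Z(z)|$ bounded for large $|z|$. Setting: $a,b$ are $\mathbb B$-valued Hölder continuous functions on $\mathbb C_j$; solutions are $\mathbb B$-valued functions with continuous first partials satisfying the equation. A Cauchy kernel in $\mathbb C_j$ is a family $Z^{(-1)}(1,z_0,z)$, $Z^{(-1)}(j,z_0,z)$, $z_0\in\mathbb C_j$, both solutions in $z\ne z_0$, with $\lim_{z\to z_0}(z-z_0)Z^{(-1)}(\alpha,z_0,z)=\alpha$, $\alpha=1,j$. *)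

From Stdlib Require Import Reals Lra.
From Coquelicot Require Import Coquelicot.
Open Scope R_scope.

(** * Bicomplex numbers
    W = b0 + i b1 + j b2 + i j b3,  i^2 = j^2 = -1, ij = ji.
    Equivalently W = u + j v with u = b0 + i b1, v = b2 + i b3 in C_i. *)
Record B := mkB { b0 : R; b1 : R; b2 : R; b3 : R }.

Definition Bzero : B := mkB 0 0 0 0.
Definition Bone : B := mkB 1 0 0 0.
Definition Bj : B := mkB 0 0 1 0.

Definition Badd (w v : B) : B :=
  mkB (b0 w + b0 v) (b1 w + b1 v) (b2 w + b2 v) (b3 w + b3 v).
Definition Bopp (w : B) : B := mkB (- b0 w) (- b1 w) (- b2 w) (- b3 w).
Definition Bsub (w v : B) : B := Badd w (Bopp v).
Definition Bscal (r : R) (w : B) : B :=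
  mkB (r * b0 w) (r * b1 w) (r * b2 w) (r * b3 w).

(** product, from i^2 = j^2 = -1, ij = ji (hence (ij)^2 = 1) *)
Definition Bmul (a c : B) : B :=
  mkB (b0 a * b0 c - b1 a * b1 c - b2 a * b2 c + b3 a * b3 c)
      (b0 a * b1 c + b1 a * b0 c - b2 a * b3 c - b3 a * b2 c)
      (b0 a * b2 c + b2 a * b0 c - b1 a * b3 c - b3 a * b1 c)
      (b0 a * b3 c + b3 a * b0 c + b1 a * b2 c + b2 a * b1 c).

(** conjugation  conj(u + j v) = u - j v *)
Definition Bconj (w : B) : B := mkB (b0 w) (b1 w) (- b2 w) (- b3 w).

Definition Ci := (R * R)%type.
Definition Ci_mod (c : Ci) : R := sqrt (fst c * fst c + snd c * snd c).
Definition Ci_add (c d : Ci) : Ci := (fst c + fst d, snd c + snd d).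
Definition Ci_sub (c d : Ci) : Ci := (fst c - fst d, snd c - snd d).
Definition Ci_mul_i (c : Ci) : Ci := (- snd c, fst c).

Definition Sc (w : B) : Ci := (b0 w, b1 w).
Definition Vec (w : B) : Ci := (b2 w, b3 w).
Definition Bplus (w : B) : Ci := Ci_sub (Sc w) (Ci_mul_i (Vec w)).
Definition Bminus (w : B) : Ci := Ci_add (Sc w) (Ci_mul_i (Vec w)).

Definition Bnorm (w : B) : R := (Ci_mod (Bplus w) + Ci_mod (Bminus w)) / 2.

(** * The plane C_j:  points z = x + j y, represented as pairs (x, y) *)
Definition Pt := (R * R)%type.
Definition zB (z : Pt) : B := mkB (fst z) 0 (snd z) 0.
Definition Pdist (z w : Pt) : R := Bnorm (Bsub (zB z) (zB w)).
Definition Pabs (z : Pt) : R := Bnorm (zB z).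

Definition holder (f : Pt -> B) : Prop :=
  exists (mu C : R), 0 < mu <= 1 /\ 0 <= C /\
    forall z w : Pt, z <> w -> Bnorm (Bsub (f z) (f w)) <= C * Rpower (Pdist z w) mu.

Definition comps : list (B -> R) := b0 :: b1 :: b2 :: b3 :: nil.

Definition is_pdx (W : Pt -> B) (z : Pt) (L : B) : Prop :=
  forall c, List.In c comps ->
    is_derive (fun t : R => c (W (t, snd z))) (fst z) (c L).
Definition is_pdy (W : Pt -> B) (z : Pt) (L : B) : Prop :=
  forall c, List.In c comps ->
    is_derive (fun t : R => c (W (fst z, t))) (snd z) (c L).

Definition cont_within (D : Pt -> Prop) (f : Pt -> B) (z : Pt) : Prop :=
  forall eps, 0 < eps -> exists delta, 0 < delta /\
    forall w, D w -> Pdist w z < delta -> Bnorm (Bsub (f w) (f z)) < eps.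

Definition dbar_of (Wx Wy : B) : B := Bscal (/ 2) (Badd Wx (Bmul Bj Wy)).

Definition is_solution_on (A Bc : Pt -> B) (D : Pt -> Prop) (W : Pt -> B) : Prop :=
  exists Wx Wy : Pt -> B,
    forall z, D z ->
      is_pdx W z (Wx z) /\ is_pdy W z (Wy z) /\
      cont_within D Wx z /\ cont_within D Wy z /\
      dbar_of (Wx z) (Wy z) = Badd (Bmul (A z) (W z)) (Bmul (Bc z) (Bconj (W z))).

Definition punctured (z0 : Pt) : Pt -> Prop := fun z => z <> z0.

Definition kernel_limit (Z : Pt -> B) (z0 : Pt) (alpha : B) : Prop :=
  forall eps, 0 < eps -> exists delta, 0 < delta /\
    forall z, z <> z0 -> Pdist z z0 < delta ->
      Bnorm (Bsub (Bmul (Bsub (zB z) (zB z0)) (Z z)) alpha) < eps.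

(** A Cauchy kernel in C_j for  dbar W = A W + Bc conj W :
    Z1 z0 = Z^{(-1)}(1, z0, .),  Zj z0 = Z^{(-1)}(j, z0, .) *)
Definition cauchy_kernel (A Bc : Pt -> B) (Z1 Zj : Pt -> Pt -> B) : Prop :=
  forall z0 : Pt,
    is_solution_on A Bc (punctured z0) (Z1 z0) /\
    is_solution_on A Bc (punctured z0) (Zj z0) /\
    kernel_limit (Z1 z0) z0 Bone /\
    kernel_limit (Zj z0) z0 Bj.

Definition bigO_inv (Z : Pt -> B) : Prop :=
  exists M R0 : R, forall z, R0 < Pabs z -> Pabs z * Bnorm (Z z) <= M.

Definition decaying_kernel (A Bc : Pt -> B) (Z1 Zj : Pt -> Pt -> B) : Prop :=
  cauchy_kernel A Bc Z1 Zj /\ forall z0, bigO_inv (Z1 z0) /\ bigO_inv (Zj z0).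

Definition unique_decaying_kernel (A Bc : Pt -> B) : Prop :=
  forall Z1 Zj Z1' Zj' : Pt -> Pt -> B,
    decaying_kernel A Bc Z1 Zj -> decaying_kernel A Bc Z1' Zj' ->
    forall z0 z, z <> z0 -> Z1 z0 z = Z1' z0 z /\ Zj z0 z = Zj' z0 z.

(** If [D] solves [∂̄D = aD + bD̄] and [V] solves the adjoint equation
    [∂̄V = -aV - b̄V̄], the [j]-coordinate of [D V dz] is a closed 1-form.
    Let [D] be the difference of two kernels with the same [α] at [z0], so that
    [(z - z0) D → 0] and [D = O(1/|z|)], and let [V] be a kernel of the adjoint equation at
    [z1 ≠ z0]. The integral of [D V dz] over a large square tends to [0] since
    [D V = O(|z|^-2)]; it equals the sum of the integrals over small squares around [z0],
    which tend to [0], and around [z1], which tend to [2π b0 (D(z1) α')]. Hence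
    [b0 (D(z1) α') = 0] for [α' = 1, j], and applying this also to [i D] gives [D(z1) = 0].
    The adjoint of the adjoint equation is the original one, which gives the second claim. *)

From Stdlib Require Import Reals Lra List FunctionalExtensionality.
From Coquelicot Require Import Coquelicot.
Open Scope R_scope.

(** ∮ P dx + Q dy over the positively oriented boundary of [A,B] × [C,D]. *)
Definition rect_integral (P Q : R -> R -> R) (A B C D : R) : R :=
  RInt (fun x => P x C) A B + RInt (fun y => Q B y) C D
  - RInt (fun x => P x D) A B - RInt (fun y => Q A y) C D.

Definition square_integral (P Q : R -> R -> R) (z : Pt) (r : R) : R :=
  rect_integral P Q (fst z - r) (fst z + r) (snd z - r) (snd z + r).

(** [G] plays the role of [∂P/∂y = ∂Q/∂x]. *)
Definition closed_form_on (U : R -> R -> Prop) (P Q : R -> R -> R) : Prop :=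
  exists G : R -> R -> R, forall x y, U x y ->
    ex_derive (fun t => P t y) x /\ ex_derive (fun t => Q x t) y /\
    is_derive (fun t => P x t) y (G x y) /\ is_derive (fun t => Q t y) x (G x y) /\
    continuity_2d_pt G x y.

Lemma continuity_2d_pt_ext_loc f g x y d :
  0 < d -> (forall u v, Rabs (u - x) < d -> Rabs (v - y) < d -> g u v = f u v) ->
  continuity_2d_pt f x y -> continuity_2d_pt g x y.
Proof.
  intros Hd He Hf eps. destruct (Hf eps) as [del H].
  assert (Hm : 0 < Rmin del d) by (apply Rmin_pos; [apply cond_pos|lra]).
  exists (mkposreal _ Hm); simpl; intros u v Hu Hv.
  assert (Hu' := Rlt_le_trans _ _ _ Hu (Rmin_r _ _)).
  assert (Hv' := Rlt_le_trans _ _ _ Hv (Rmin_r _ _)).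
  rewrite !He by (rewrite ?Rminus_eq_0, ?Rabs_R0; lra).
  apply H; [apply (Rlt_le_trans _ _ _ Hu) | apply (Rlt_le_trans _ _ _ Hv)]; apply Rmin_l.
Qed.

Lemma continuity_2d_pt_slice_y f x y :
  continuity_2d_pt f x y -> continuous (fun v => f x v) y.
Proof.
  intros H. apply (continuity_pt_filterlim (fun v => f x v)).
  intros eps Heps. destruct (H (mkposreal _ Heps)) as [d Hd].
  exists d; split; [apply cond_pos|]. intros v [_ Hv]. apply Hd; [|exact Hv].
  rewrite Rminus_eq_0, Rabs_R0. apply cond_pos.
Qed.

Lemma segment_between a b z : a <= b -> Rmin a b <= z <= Rmax a b -> a <= z <= b.
Proof. intros Hab. rewrite Rmin_left, Rmax_right by lra. auto. Qed.

Section ClosedForm.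

Variables (U : R -> R -> Prop) (P Q : R -> R -> R).
Hypothesis closedPQ : closed_form_on U P Q.

Lemma closed_form_ex_RInt_x a b y :
  (forall x, Rmin a b <= x <= Rmax a b -> U x y) -> ex_RInt (fun x => P x y) a b.
Proof.
  destruct closedPQ as [G HG]; intros HU.
  apply (ex_RInt_continuous (V:=R_CompleteNormedModule)); intros x Hx.
  apply (ex_derive_continuous (K:=R_AbsRing) (fun t => P t y)).
  exact (proj1 (HG x y (HU x Hx))).
Qed.

Lemma closed_form_ex_RInt_y a b x :
  (forall y, Rmin a b <= y <= Rmax a b -> U x y) -> ex_RInt (fun y => Q x y) a b.
Proof.
  destruct closedPQ as [G HG]; intros HU.
  apply (ex_RInt_continuous (V:=R_CompleteNormedModule)); intros y Hy.
  apply (ex_derive_continuous (K:=R_AbsRing) (fun t => Q x t)).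
  exact (proj1 (proj2 (HG x y (HU y Hy)))).
Qed.

(** Differentiation under the integral sign followed by the fundamental theorem of
    calculus in [y]; this is where [∂P/∂y = ∂Q/∂x] enters. *)
Lemma derive_vertical_integral C D t e : C <= D -> 0 < e ->
  (forall x y, Rabs (x - t) < e -> C - e < y < D + e -> U x y) ->
  is_derive (fun u => RInt (fun y => Q u y) C D) t (P t D - P t C).
Proof.
  intros HCD He HU. destruct closedPQ as [G HG].
  assert (HU' : forall x y, Rabs (x - t) < e -> C <= y <= D -> U x y)
    by (intros x y Hx Hy; apply HU; lra).
  assert (Ht : forall y, C <= y <= D -> U t y)
    by (intros y Hy; apply HU'; [rewrite Rminus_eq_0, Rabs_R0|]; lra).
  assert (HD : is_derive (fun u => RInt (fun y => Q u y) C D) t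
                 (RInt (fun y => Derive (fun u => Q u y) t) C D)).
  { apply (is_derive_RInt_param (fun u y => Q u y)).
    - exists (mkposreal e He); intros u Hu y Hy.
      apply segment_between in Hy; [|lra].
      destruct (HG u y (HU' u y Hu Hy)) as (_ & _ & _ & HQx & _). eexists; exact HQx.
    - intros y Hy. apply segment_between in Hy; [|lra].
      apply (continuity_2d_pt_ext_loc G _ t y e He).
      + intros u v Hu Hv. apply Rabs_lt_between' in Hv.
        destruct (HG u v (HU u v Hu ltac:(lra))) as (_ & _ & _ & HQx & _).
        exact (is_derive_unique _ _ _ HQx).
      + exact (proj2 (proj2 (proj2 (proj2 (HG t y (Ht y Hy)))))).
    - exists (mkposreal e He); intros u Hu.
      apply closed_form_ex_RInt_y; intros y Hy.
      apply segment_between in Hy; [|lra]. apply HU'; auto. }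
  replace (P t D - P t C) with (RInt (fun y => Derive (fun u => Q u y) t) C D); [exact HD|].
  rewrite (RInt_ext _ (fun y => G t y)).
  - apply is_RInt_unique, (is_RInt_derive (fun y => P t y)); intros y Hy;
      apply segment_between in Hy; try lra;
      destruct (HG t y (Ht y Hy)) as (_ & _ & HPy & _ & HGc).
    + exact HPy.
    + exact (continuity_2d_pt_slice_y _ _ _ HGc).
  - intros y Hy. rewrite Rmin_left, Rmax_right in Hy by lra.
    destruct (HG t y (Ht y ltac:(lra))) as (_ & _ & _ & HQx & _).
    exact (is_derive_unique _ _ _ HQx).
Qed.

(** Green's theorem for a rectangle: [t ↦ ∮ over ∂([A,t] × [C,D])] has zero derivative. *)
Lemma rect_integral_closed A B C D e : A < B -> C <= D -> 0 < e ->
  (forall x y, A - e < x < B + e -> C - e < y < D + e -> U x y) ->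
  rect_integral P Q A B C D = 0.
Proof.
  intros HAB HCD He HU.
  set (g := fun t => RInt (fun x => P x C) A t - RInt (fun x => P x D) A t
                     + RInt (fun y => Q t y) C D - RInt (fun y => Q A y) C D).
  assert (Hg : forall t, A <= t <= B -> is_derive g t 0).
  { intros t Ht.
    assert (Hhor : forall y0, C - e < y0 < D + e ->
              is_derive (RInt (fun x => P x y0) A) t (P t y0)).
    { intros y0 Hy0.
      apply (is_derive_RInt (fun x => P x y0) (RInt (fun x => P x y0) A) A t).
      - exists (mkposreal e He); intros b Hb. change (Rabs (b - t) < e) in Hb.
        apply Rabs_lt_between' in Hb.
        apply (RInt_correct (V:=R_CompleteNormedModule)), closed_form_ex_RInt_x.
        intros x Hx. apply HU; [|lra].
        unfold Rmin, Rmax in Hx; destruct Rle_dec; lra.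
      - destruct closedPQ as [G HG].
        apply (ex_derive_continuous (K:=R_AbsRing) (fun x => P x y0)).
        exact (proj1 (HG t y0 (HU t y0 ltac:(lra) Hy0))). }
    assert (Hver : is_derive (fun u => RInt (fun y => Q u y) C D) t (P t D - P t C)).
    { apply (derive_vertical_integral C D t e HCD He).
      intros x y Hx Hy. apply Rabs_lt_between' in Hx. apply HU; lra. }
    assert (HC := Hhor C ltac:(lra)). assert (HD := Hhor D ltac:(lra)).
    assert (Hconst := is_derive_const (K:=R_AbsRing) (RInt (fun y => Q A y) C D) t).
    assert (Hall := is_derive_minus _ _ _ _ _
                      (is_derive_plus _ _ _ _ _ (is_derive_minus _ _ _ _ _ HC HD) Hver) Hconst).
    match type of Hall with is_derive _ _ ?l =>
      replace l with 0 in Hall by (unfold minus, plus, opp, zero; simpl; ring) end.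
    exact Hall. }
  assert (E := eq_is_derive g A B Hg HAB).
  unfold g in E. rewrite !RInt_point in E.
  unfold rect_integral. unfold zero in E; simpl in E. lra.
Qed.

End ClosedForm.

Lemma closed_form_on_sub (U V : R -> R -> Prop) P Q :
  (forall x y, V x y -> U x y) -> closed_form_on U P Q -> closed_form_on V P Q.
Proof. intros HVU [G HG]. exists G. intros x y Hxy. apply HG, HVU, Hxy. Qed.

Lemma rect_integral_split_x P Q A m B C D :
  ex_RInt (fun x => P x C) A m -> ex_RInt (fun x => P x C) m B ->
  ex_RInt (fun x => P x D) A m -> ex_RInt (fun x => P x D) m B ->
  rect_integral P Q A B C D = rect_integral P Q A m C D + rect_integral P Q m B C D.
Proof.
  intros H1 H2 H3 H4. unfold rect_integral.
  rewrite <- (RInt_Chasles (fun x => P x C) A m B H1 H2).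
  rewrite <- (RInt_Chasles (fun x => P x D) A m B H3 H4).
  unfold plus; simpl. ring.
Qed.

Lemma rect_integral_split_y P Q A B C m D :
  ex_RInt (fun y => Q A y) C m -> ex_RInt (fun y => Q A y) m D ->
  ex_RInt (fun y => Q B y) C m -> ex_RInt (fun y => Q B y) m D ->
  rect_integral P Q A B C D = rect_integral P Q A B C m + rect_integral P Q A B m D.
Proof.
  intros H1 H2 H3 H4. unfold rect_integral.
  rewrite <- (RInt_Chasles (fun y => Q A y) C m D H1 H2).
  rewrite <- (RInt_Chasles (fun y => Q B y) C m D H3 H4).
  unfold plus; simpl. ring.
Qed.

Definition off_pts (p q : Pt) (x y : R) : Prop := (x, y) <> p /\ (x, y) <> q.

Definition outside_rect (p : Pt) (A B C D : R) : Prop :=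
  fst p < A \/ B < fst p \/ snd p < C \/ D < snd p.

Lemma outside_rect_thicken p A B C D : outside_rect p A B C D ->
  exists e, 0 < e /\ forall x y, A - e < x < B + e -> C - e < y < D + e -> (x, y) <> p.
Proof.
  destruct p as [px py]; unfold outside_rect; simpl.
  intros Hp. exists (Rmax (Rmax (A - px) (px - B)) (Rmax (C - py) (py - D))).
  unfold Rmax; split; [repeat destruct Rle_dec; lra|].
  intros x y Hx Hy E. injection E as -> ->.
  repeat destruct Rle_dec; lra.
Qed.

Section TwoPoles.

Variables (p q : Pt) (P Q : R -> R -> R).
Hypothesis closedPQ : closed_form_on (off_pts p q) P Q.

Lemma rect_integral_off_pts A B C D : A < B -> C <= D ->
  outside_rect p A B C D -> outside_rect q A B C D -> rect_integral P Q A B C D = 0.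
Proof.
  intros HAB HCD Hp Hq.
  destruct (outside_rect_thicken p A B C D Hp) as [e1 [He1 Hp1]].
  destruct (outside_rect_thicken q A B C D Hq) as [e2 [He2 Hq1]].
  apply (rect_integral_closed (off_pts p q) P Q closedPQ A B C D (Rmin e1 e2)); auto.
  - apply Rmin_pos; auto.
  - pose proof (Rmin_l e1 e2); pose proof (Rmin_r e1 e2).
    intros x y Hx Hy; split; [apply Hp1 | apply Hq1]; lra.
Qed.

Lemma off_pts_in_rect A B C D x y : outside_rect q A B C D ->
  A <= x <= B -> C <= y <= D -> (x <> fst p \/ y <> snd p) -> off_pts p q x y.
Proof.
  intros Hq Hx Hy Hne. split.
  - intros E. subst p. simpl in Hne. tauto.
  - intros E. subst q. unfold outside_rect in Hq. simpl in Hq. lra.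
Qed.

Lemma rect_integral_excise A B C D r : 0 < r ->
  A < fst p - r -> fst p + r < B -> C < snd p - r -> snd p + r < D ->
  outside_rect q A B C D ->
  rect_integral P Q A B C D = square_integral P Q p r.
Proof.
  intros Hr H1 H2 H3 H4 Hq. unfold square_integral.
  set (px := fst p) in *. set (py := snd p) in *.
  assert (HU : forall x y, A <= x <= B -> C <= y <= D ->
                 (x <> px \/ y <> py) -> off_pts p q x y)
    by (intros; apply (off_pts_in_rect A B C D); auto).
  assert (Hx : forall y a b, A <= a <= b -> b <= B -> C <= y <= D -> y <> py ->
                 ex_RInt (fun x => P x y) a b).
  { intros y a b Ha Hb Hy Hne. apply (closed_form_ex_RInt_x _ _ _ closedPQ).
    intros x Hxab. apply segment_between in Hxab; [|lra]. apply HU; auto; lra. }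
  assert (Hy : forall x a b, C <= a <= b -> b <= D -> A <= x <= B -> x <> px ->
                 ex_RInt (fun y => Q x y) a b).
  { intros x a b Ha Hb Hxr Hne. apply (closed_form_ex_RInt_y _ _ _ closedPQ).
    intros y Hyab. apply segment_between in Hyab; [|lra]. apply HU; auto; lra. }
  rewrite (rect_integral_split_x P Q A (px - r) B C D) by (apply Hx; lra).
  rewrite (rect_integral_split_x P Q (px - r) (px + r) B C D) by (apply Hx; lra).
  rewrite (rect_integral_split_y P Q (px - r) (px + r) C (py - r) D) by (apply Hy; lra).
  rewrite (rect_integral_split_y P Q (px - r) (px + r) (py - r) (py + r) D) by (apply Hy; lra).
  assert (Hout : forall A' B' C' D', A <= A' -> B' <= B -> C <= C' -> D' <= D ->
                   outside_rect q A' B' C' D')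
    by (unfold outside_rect in *; intros; lra).
  rewrite (rect_integral_off_pts A (px - r)), (rect_integral_off_pts (px + r) B),
    (rect_integral_off_pts (px - r) (px + r) C (py - r)),
    (rect_integral_off_pts (px - r) (px + r) (py + r) D);
    try (apply Hout; lra); try (unfold outside_rect; fold px py; lra); lra.
Qed.

End TwoPoles.

Lemma off_pts_sym p q x y : off_pts q p x y -> off_pts p q x y.
Proof. intros [H1 H2]; split; auto. Qed.

Lemma rect_integral_two_squares_x p q P Q A B C D r0 r1 :
  closed_form_on (off_pts p q) P Q -> 0 < r0 -> 0 < r1 ->
  fst p + r0 < fst q - r1 ->
  A < fst p - r0 -> fst q + r1 < B ->
  C < snd p - r0 -> snd p + r0 < D -> C < snd q - r1 -> snd q + r1 < D ->
  rect_integral P Q A B C D = square_integral P Q p r0 + square_integral P Q q r1.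
Proof.
  intros HF Hr0 Hr1 Hpq HA HB HC0 HD0 HC1 HD1.
  set (m := (fst p + r0 + (fst q - r1)) / 2).
  assert (HF' := closed_form_on_sub _ _ P Q (off_pts_sym p q) HF).
  assert (Hm : forall y a b, y <> snd p -> y <> snd q -> ex_RInt (fun x => P x y) a b).
  { intros y a b Hyp Hyq. apply (closed_form_ex_RInt_x _ _ _ HF); intros x _.
    split; intros E; subst; simpl in *; tauto. }
  rewrite (rect_integral_split_x P Q A m B C D) by (apply Hm; lra).
  rewrite (rect_integral_excise p q P Q HF A m C D r0),
    (rect_integral_excise q p P Q HF' m B C D r1); unfold m, outside_rect in *; auto; lra.
Qed.

Lemma rect_integral_two_squares_y p q P Q A B C D r0 r1 :
  closed_form_on (off_pts p q) P Q -> 0 < r0 -> 0 < r1 ->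
  snd p + r0 < snd q - r1 ->
  A < fst p - r0 -> fst p + r0 < B -> A < fst q - r1 -> fst q + r1 < B ->
  C < snd p - r0 -> snd q + r1 < D ->
  rect_integral P Q A B C D = square_integral P Q p r0 + square_integral P Q q r1.
Proof.
  intros HF Hr0 Hr1 Hpq HA0 HB0 HA1 HB1 HC HD.
  set (m := (snd p + r0 + (snd q - r1)) / 2).
  assert (HF' := closed_form_on_sub _ _ P Q (off_pts_sym p q) HF).
  assert (Hm : forall x a b, x <> fst p -> x <> fst q -> ex_RInt (fun y => Q x y) a b).
  { intros x a b Hxp Hxq. apply (closed_form_ex_RInt_y _ _ _ HF); intros y _.
    split; intros E; subst; simpl in *; tauto. }
  rewrite (rect_integral_split_y P Q A B C m D) by (apply Hm; lra).
  rewrite (rect_integral_excise p q P Q HF A B C m r0),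
    (rect_integral_excise q p P Q HF' A B m D r1); unfold m, outside_rect in *; auto; lra.
Qed.

Lemma rect_integral_two_squares p q P Q A B C D r0 r1 :
  closed_form_on (off_pts p q) P Q -> 0 < r0 -> 0 < r1 ->
  r0 + r1 < Rmax (Rabs (fst p - fst q)) (Rabs (snd p - snd q)) ->
  A < fst p - r0 -> fst p + r0 < B -> C < snd p - r0 -> snd p + r0 < D ->
  A < fst q - r1 -> fst q + r1 < B -> C < snd q - r1 -> snd q + r1 < D ->
  rect_integral P Q A B C D = square_integral P Q p r0 + square_integral P Q q r1.
Proof.
  intros HF Hr0 Hr1 Hd. intros.
  assert (HF' := closed_form_on_sub _ _ P Q (off_pts_sym p q) HF).
  unfold Rmax, Rabs in Hd. repeat destruct Rle_dec in Hd; repeat destruct Rcase_abs in Hd;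
  first
    [ apply rect_integral_two_squares_x; auto; lra
    | rewrite Rplus_comm; apply rect_integral_two_squares_x; auto; lra
    | apply rect_integral_two_squares_y; auto; lra
    | rewrite Rplus_comm; apply rect_integral_two_squares_y; auto; lra ].
Qed.

(** The ℓ¹ norm of the coordinates; it is equivalent to [Bnorm] and submultiplicative. *)
Definition Bl1 (w : B) : R := Rabs (b0 w) + Rabs (b1 w) + Rabs (b2 w) + Rabs (b3 w).

Lemma Rabs_le_Ci_mod a b : Rabs a <= Ci_mod (a, b) /\ Rabs b <= Ci_mod (a, b).
Proof.
  unfold Ci_mod; simpl. rewrite <- !sqrt_Rsqr_abs. unfold Rsqr.
  split; apply sqrt_le_1_alt; nra.
Qed.

Lemma Rabs_sq a : Rabs a * Rabs a = a * a.
Proof. rewrite <- Rabs_mult. apply Rabs_right. apply Rle_ge, Rle_0_sqr. Qed.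

Lemma Ci_mod_le_l1 a b : Ci_mod (a, b) <= Rabs a + Rabs b.
Proof.
  unfold Ci_mod; simpl. pose proof (Rabs_pos a). pose proof (Rabs_pos b).
  rewrite <- (sqrt_Rsqr (Rabs a + Rabs b)) by lra.
  apply sqrt_le_1_alt. unfold Rsqr.
  rewrite <- (Rabs_sq a), <- (Rabs_sq b). nra.
Qed.

Lemma Bnorm_coords w : Bnorm w =
  (Ci_mod (b0 w + b3 w, b1 w - b2 w) + Ci_mod (b0 w - b3 w, b1 w + b2 w)) / 2.
Proof.
  unfold Bnorm, Bplus, Bminus, Ci_sub, Ci_add, Ci_mul_i, Sc, Vec; simpl.
  do 4 f_equal; ring.
Qed.

Lemma Rabs_coords_le_Bnorm w : Rabs (b0 w) <= Bnorm w /\ Rabs (b1 w) <= Bnorm w /\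
  Rabs (b2 w) <= Bnorm w /\ Rabs (b3 w) <= Bnorm w.
Proof.
  rewrite Bnorm_coords.
  destruct (Rabs_le_Ci_mod (b0 w + b3 w) (b1 w - b2 w)) as [H1 H2].
  destruct (Rabs_le_Ci_mod (b0 w - b3 w) (b1 w + b2 w)) as [H3 H4].
  set (m1 := Ci_mod _) in *. set (m2 := Ci_mod _) in *.
  revert H1 H2 H3 H4. unfold Rabs; repeat destruct Rcase_abs; intros; repeat split; lra.
Qed.

Lemma Bnorm_le_Bl1 w : Bnorm w <= Bl1 w.
Proof.
  rewrite Bnorm_coords. unfold Bl1.
  pose proof (Ci_mod_le_l1 (b0 w + b3 w) (b1 w - b2 w)).
  pose proof (Ci_mod_le_l1 (b0 w - b3 w) (b1 w + b2 w)).
  set (m1 := Ci_mod _) in *. set (m2 := Ci_mod _) in *.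
  revert H H0. unfold Rabs; repeat destruct Rcase_abs; intros; lra.
Qed.

Lemma Bl1_le_Bnorm w : Bl1 w <= 4 * Bnorm w.
Proof. unfold Bl1. pose proof (Rabs_coords_le_Bnorm w). lra. Qed.

Lemma Rabs_coords_le_Bl1 w : Rabs (b0 w) <= Bl1 w /\ Rabs (b1 w) <= Bl1 w /\
  Rabs (b2 w) <= Bl1 w /\ Rabs (b3 w) <= Bl1 w.
Proof.
  unfold Bl1. pose proof (Rabs_pos (b0 w)). pose proof (Rabs_pos (b1 w)).
  pose proof (Rabs_pos (b2 w)). pose proof (Rabs_pos (b3 w)). lra.
Qed.

Lemma Rabs_b2_b0_le_Bl1 w K : Bl1 w <= K -> Rabs (b2 w) <= K /\ Rabs (b0 w) <= K.
Proof. pose proof (Rabs_coords_le_Bl1 w). lra. Qed.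

Lemma Bl1_ge0 w : 0 <= Bl1 w.
Proof. pose proof (Rabs_coords_le_Bl1 w). pose proof (Rabs_pos (b0 w)). lra. Qed.

Lemma Bl1_add x y : Bl1 (Badd x y) <= Bl1 x + Bl1 y.
Proof.
  destruct x as [x0 x1 x2 x3], y as [y0 y1 y2 y3]. unfold Bl1, Badd; simpl.
  pose proof (Rabs_triang x0 y0). pose proof (Rabs_triang x1 y1).
  pose proof (Rabs_triang x2 y2). pose proof (Rabs_triang x3 y3). lra.
Qed.

Lemma Bl1_opp x : Bl1 (Bopp x) = Bl1 x.
Proof. destruct x. unfold Bl1, Bopp; simpl. rewrite !Rabs_Ropp. reflexivity. Qed.

Lemma Bl1_sub x y : Bl1 (Bsub x y) <= Bl1 x + Bl1 y.
Proof. unfold Bsub. rewrite <- (Bl1_opp y). apply Bl1_add. Qed.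

Lemma Bl1_le_sub x y : Bl1 x <= Bl1 y + Bl1 (Bsub x y).
Proof.
  replace x with (Badd y (Bsub x y)) at 1 by
    (destruct x, y; unfold Badd, Bsub, Bopp; simpl; f_equal; ring).
  apply Bl1_add.
Qed.

Lemma Bl1_sub0 x : Bl1 (Bsub x Bzero) = Bl1 x.
Proof. destruct x. unfold Bl1, Bsub, Badd, Bopp, Bzero; simpl. rewrite !Ropp_0, !Rplus_0_r. reflexivity. Qed.

Lemma Bl1_mul x y : Bl1 (Bmul x y) <= Bl1 x * Bl1 y.
Proof.
  destruct x as [x0 x1 x2 x3], y as [y0 y1 y2 y3]. unfold Bl1, Bmul; simpl.
  assert (T : forall a b c d, Rabs (a + b + c + d) <= Rabs a + Rabs b + Rabs c + Rabs d)
    by (intros; unfold Rabs; repeat destruct Rcase_abs; lra).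
  pose proof (T (x0*y0) (-(x1*y1)) (-(x2*y2)) (x3*y3)).
  pose proof (T (x0*y1) (x1*y0) (-(x2*y3)) (-(x3*y2))).
  pose proof (T (x0*y2) (x2*y0) (-(x1*y3)) (-(x3*y1))).
  pose proof (T (x0*y3) (x3*y0) (x1*y2) (x2*y1)).
  rewrite !Rabs_Ropp, !Rabs_mult in *. unfold Rminus. nra.
Qed.

Lemma zB_sub z z0 : Bsub (zB z) (zB z0) = mkB (fst z - fst z0) 0 (snd z - snd z0) 0.
Proof. unfold Bsub, Badd, Bopp, zB; simpl. f_equal; ring. Qed.

Lemma Pdist_le z w : Pdist z w <= Rabs (fst z - fst w) + Rabs (snd z - snd w).
Proof.
  unfold Pdist. rewrite zB_sub. eapply Rle_trans; [apply Bnorm_le_Bl1|].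
  unfold Bl1; simpl. rewrite Rabs_R0. lra.
Qed.

Lemma Rabs_coords_le_Pabs z : Rabs (fst z) <= Pabs z /\ Rabs (snd z) <= Pabs z.
Proof. unfold Pabs. pose proof (Rabs_coords_le_Bnorm (zB z)). simpl in *. tauto. Qed.

(** The inverse of [u + j v], using [(u + j v)(u - j v) = u² + v²]. *)
Definition Binv_pt (u v : R) : B := mkB (u / (u*u+v*v)) 0 (- v / (u*u+v*v)) 0.

Lemma Binv_ptK u v X : u*u+v*v <> 0 -> Bmul (Binv_pt u v) (Bmul (mkB u 0 v 0) X) = X.
Proof. intros H. destruct X. unfold Binv_pt, Bmul; simpl. f_equal; field; auto. Qed.

Lemma Bl1_Binv_pt u v r : 0 < r -> r <= Rmax (Rabs u) (Rabs v) -> Bl1 (Binv_pt u v) <= 2 / r.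
Proof.
  intros Hr Hm. set (m := Rmax (Rabs u) (Rabs v)) in *.
  assert (Hu : Rabs u <= m) by apply Rmax_l. assert (Hv : Rabs v <= m) by apply Rmax_r.
  assert (Hsq : m * m <= u*u+v*v).
  { rewrite <- (Rabs_sq u), <- (Rabs_sq v).
    pose proof (Rabs_pos u); pose proof (Rabs_pos v).
    unfold m, Rmax in *; destruct Rle_dec; nra. }
  assert (Hpos : 0 < u*u+v*v) by nra.
  unfold Bl1, Binv_pt; simpl. rewrite Rabs_R0.
  unfold Rdiv. rewrite !Rabs_mult, Rabs_Ropp, (Rabs_right (/ _))
    by (apply Rle_ge, Rlt_le, Rinv_0_lt_compat; lra).
  apply Rle_trans with ((Rabs u + Rabs v) / (m * m)).
  - unfold Rdiv. assert (/ (u*u+v*v) <= / (m*m)) by (apply Rinv_le_contravar; nra).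
    pose proof (Rabs_pos u); pose proof (Rabs_pos v). nra.
  - apply Rle_trans with (2 * m / (m * m)).
    + unfold Rdiv. apply Rmult_le_compat_r; [left; apply Rinv_0_lt_compat; nra | lra].
    + replace (2 * m / (m * m)) with (2 / m) by (field; lra).
      unfold Rdiv. apply Rmult_le_compat_l; [lra|]. apply Rinv_le_contravar; lra.
Qed.

Lemma is_derive_Rplus f g x df dg : is_derive f x df -> is_derive g x dg ->
  is_derive (fun t => f t + g t) x (df + dg).
Proof. intros Hf Hg. exact (is_derive_plus f g x df dg Hf Hg). Qed.

Lemma is_derive_Rminus f g x df dg : is_derive f x df -> is_derive g x dg ->
  is_derive (fun t => f t - g t) x (df - dg).
Proof. intros Hf Hg. exact (is_derive_minus f g x df dg Hf Hg). Qed.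

Lemma is_derive_Rmult f g x df dg : is_derive f x df -> is_derive g x dg ->
  is_derive (fun t => f t * g t) x (df * g x + f x * dg).
Proof. intros Hf Hg. exact (is_derive_mult f g x df dg Hf Hg Rmult_comm). Qed.

Lemma is_derive_Rconst (a x : R) : is_derive (fun _ => a) x 0.
Proof. exact (is_derive_const (K:=R_AbsRing) a x). Qed.

Lemma is_derive_ext_val (f g : R -> R) x df dg :
  (forall t, f t = g t) -> df = dg -> is_derive f x df -> is_derive g x dg.
Proof. intros Hfg <-. apply is_derive_ext, Hfg. Qed.

Ltac derive_poly := match goal with
 | |- is_derive (fun t => _ + _) _ _ => apply is_derive_Rplus; derive_poly
 | |- is_derive (fun t => _ - _) _ _ => apply is_derive_Rminus; derive_poly
 | |- is_derive (fun t => _ * _) _ _ => apply is_derive_Rmult; derive_poly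
 | |- _ => eassumption
 end.

Ltac coords_cases Hc := simpl in Hc; destruct Hc as [<-|[<-|[<-|[<-|[]]]]].

Definition is_derive_coords (f : R -> B) (x : R) (df : B) : Prop :=
  forall c, In c comps -> is_derive (fun t => c (f t)) x (c df).

Lemma is_derive_coords_mul f g x df dg :
  is_derive_coords f x df -> is_derive_coords g x dg ->
  is_derive_coords (fun t => Bmul (f t) (g t)) x (Badd (Bmul df (g x)) (Bmul (f x) dg)).
Proof.
  intros Hf Hg c Hc.
  assert (F0 := Hf b0 ltac:(simpl; tauto)). assert (F1 := Hf b1 ltac:(simpl; tauto)).
  assert (F2 := Hf b2 ltac:(simpl; tauto)). assert (F3 := Hf b3 ltac:(simpl; tauto)).
  assert (G0 := Hg b0 ltac:(simpl; tauto)). assert (G1 := Hg b1 ltac:(simpl; tauto)).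
  assert (G2 := Hg b2 ltac:(simpl; tauto)). assert (G3 := Hg b3 ltac:(simpl; tauto)).
  coords_cases Hc;
    (eapply is_derive_ext_val; [intro; reflexivity| |]; [|cbn; derive_poly]; cbn; ring).
Qed.

Lemma is_derive_coords_sub f g x df dg :
  is_derive_coords f x df -> is_derive_coords g x dg ->
  is_derive_coords (fun t => Bsub (f t) (g t)) x (Bsub df dg).
Proof.
  intros Hf Hg c Hc. specialize (Hf c Hc). specialize (Hg c Hc).
  coords_cases Hc; exact (is_derive_Rplus _ _ _ _ _ Hf (is_derive_opp _ _ _ Hg)).
Qed.

Lemma is_derive_coords_const (a : B) x : is_derive_coords (fun _ => a) x Bzero.
Proof. intros c Hc. coords_cases Hc; apply is_derive_Rconst. Qed.

Lemma dbar_of_solve dx dy c : dbar_of dx dy = c -> dx = Bsub (Bscal 2 c) (Bmul Bj dy).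
Proof.
  intros <-. destruct dx, dy. unfold dbar_of, Bsub, Bscal, Badd, Bopp, Bmul, Bj; simpl.
  f_equal; field.
Qed.

(** For [D] solving the equation and [V] the adjoint one, the [j]-coordinate
    [b2 (D V) dx + b0 (D V) dy] of [D V dz] is closed. *)
Lemma product_form_closed a b D Dx Dy V Vx Vy :
  dbar_of Dx Dy = Badd (Bmul a D) (Bmul b (Bconj D)) ->
  dbar_of Vx Vy = Badd (Bmul (Bopp a) V) (Bmul (Bopp (Bconj b)) (Bconj V)) ->
  b2 (Badd (Bmul Dy V) (Bmul D Vy)) = b0 (Badd (Bmul Dx V) (Bmul D Vx)).
Proof.
  intros HD HV. rewrite (dbar_of_solve _ _ _ HD), (dbar_of_solve _ _ _ HV).
  destruct a, b, D, Dy, V, Vy.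
  unfold Bsub, Bscal, Badd, Bopp, Bmul, Bconj, Bj; simpl. ring.
Qed.

Ltac continuity_poly := match goal with
 | |- continuity_2d_pt (fun u v => _ + _) _ _ => apply continuity_2d_pt_plus; continuity_poly
 | |- continuity_2d_pt (fun u v => _ - _) _ _ => apply continuity_2d_pt_minus; continuity_poly
 | |- continuity_2d_pt (fun u v => _ * _) _ _ => apply continuity_2d_pt_mult; continuity_poly
 | |- _ => assumption
 end.

Definition coords_continuous_2d (f : Pt -> B) (z : Pt) : Prop :=
  forall c, In c comps -> continuity_2d_pt (fun u v => c (f (u, v))) (fst z) (snd z).

Lemma coords_continuous_2d_add f g z : coords_continuous_2d f z -> coords_continuous_2d g z ->
  coords_continuous_2d (fun w => Badd (f w) (g w)) z.
Proof.
  intros Hf Hg c Hc. specialize (Hf c Hc). specialize (Hg c Hc).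
  coords_cases Hc; apply continuity_2d_pt_plus; assumption.
Qed.

Lemma coords_continuous_2d_mul f g z : coords_continuous_2d f z -> coords_continuous_2d g z ->
  coords_continuous_2d (fun w => Bmul (f w) (g w)) z.
Proof.
  intros Hf Hg c Hc.
  assert (F0 := Hf b0 ltac:(simpl; tauto)). assert (F1 := Hf b1 ltac:(simpl; tauto)).
  assert (F2 := Hf b2 ltac:(simpl; tauto)). assert (F3 := Hf b3 ltac:(simpl; tauto)).
  assert (G0 := Hg b0 ltac:(simpl; tauto)). assert (G1 := Hg b1 ltac:(simpl; tauto)).
  assert (G2 := Hg b2 ltac:(simpl; tauto)). assert (G3 := Hg b3 ltac:(simpl; tauto)).
  coords_cases Hc; cbn; continuity_poly.
Qed.

Lemma Rabs_coord_sub_le_Bnorm c v w : In c comps -> Rabs (c v - c w) <= Bnorm (Bsub v w).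
Proof.
  intros Hc. pose proof (Rabs_coords_le_Bnorm (Bsub v w)).
  coords_cases Hc; unfold Bsub, Badd, Bopp; simpl in *; tauto.
Qed.

Definition box_in (U : Pt -> Prop) (z : Pt) : Prop :=
  exists d, 0 < d /\ forall u v, Rabs (u - fst z) < d -> Rabs (v - snd z) < d -> U (u, v).

Lemma sup_dist_gt0 z w : z <> w -> 0 < Rmax (Rabs (fst z - fst w)) (Rabs (snd z - snd w)).
Proof.
  destruct z as [x y], w as [x0 y0]; simpl. intros H.
  destruct (Req_dec x x0) as [->|E].
  - assert (y <> y0) by congruence.
    eapply Rlt_le_trans; [|apply Rmax_r]. apply Rabs_pos_lt; lra.
  - eapply Rlt_le_trans; [|apply Rmax_l]. apply Rabs_pos_lt; lra.
Qed.

Lemma box_in_punctured z z0 : z <> z0 -> box_in (punctured z0) z.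
Proof.
  intros H. exists (Rmax (Rabs (fst z - fst z0)) (Rabs (snd z - snd z0))).
  split; [exact (sup_dist_gt0 z z0 H)|].
  destruct z as [x y], z0 as [x0 y0]; unfold punctured; simpl.
  intros u v Hu Hv E. injection E as -> ->.
  rewrite (Rabs_minus_sym x0 x) in Hu. rewrite (Rabs_minus_sym y0 y) in Hv.
  unfold Rmax in *; destruct Rle_dec; lra.
Qed.

Lemma Pdist_lt_box u v z d :
  Rabs (u - fst z) < d / 2 -> Rabs (v - snd z) < d / 2 -> Pdist (u, v) z < d.
Proof. intros. eapply Rle_lt_trans; [apply Pdist_le|]. simpl. lra. Qed.

Lemma coords_continuous_2d_of_cont_within U f z :
  box_in U z -> cont_within U f z -> coords_continuous_2d f z.
Proof.
  intros [d [Hd HU]] Hc c Hcc eps.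
  destruct (Hc eps (cond_pos eps)) as [d1 [Hd1 H1]].
  assert (Hm : 0 < Rmin d (d1/2)) by (apply Rmin_pos; lra).
  exists (mkposreal _ Hm); simpl; intros u v Hu Hv.
  pose proof (Rmin_l d (d1/2)); pose proof (Rmin_r d (d1/2)).
  destruct z as [x y]; simpl in *.
  eapply Rle_lt_trans; [apply (Rabs_coord_sub_le_Bnorm c (f (u, v)) (f (x, y)) Hcc)|].
  apply H1; [apply HU; lra|]. apply Pdist_lt_box; simpl in *; lra.
Qed.

Lemma Rabs_sub_le_derive_bound (h dh : R -> R) a b K :
  (forall t, Rmin a b <= t <= Rmax a b -> is_derive h t (dh t) /\ Rabs (dh t) <= K) ->
  Rabs (h b - h a) <= K * Rabs (b - a).
Proof.
  intros H.
  destruct (MVT_gen h a b dh) as [xi [Hxi E]].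
  - intros t Ht. apply H. lra.
  - intros t Ht. apply continuity_pt_filterlim, (ex_derive_continuous (K:=R_AbsRing) h).
    eexists; apply (H t Ht).
  - rewrite E, Rabs_mult. apply Rmult_le_compat_r; [apply Rabs_pos|]. apply H, Hxi.
Qed.

Lemma Rabs_sub_le_segment a b t : Rmin a b <= t <= Rmax a b -> Rabs (t - a) <= Rabs (b - a).
Proof. unfold Rmin, Rmax, Rabs. repeat destruct Rle_dec; repeat destruct Rcase_abs; lra. Qed.

Lemma Rabs_coord_le_near U f z c : In c comps -> cont_within U f z ->
  exists d, 0 < d /\ forall w, U w -> Pdist w z < d -> Rabs (c (f w)) <= Rabs (c (f z)) + 1.
Proof.
  intros Hc H. destruct (H 1 Rlt_0_1) as [d [Hd H1]]. exists d; split; auto.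
  intros w Uw Hw. pose proof (Rabs_coord_sub_le_Bnorm c (f w) (f z) Hc).
  pose proof (Rabs_triang_inv (c (f w)) (c (f z))). specialize (H1 w Uw Hw). lra.
Qed.

(** Continuous partial derivatives give joint continuity (mean value theorem along
    each axis). *)
Lemma coords_continuous_2d_of_partials U W Wx Wy z : box_in U z ->
  (forall w, U w -> is_pdx W w (Wx w) /\ is_pdy W w (Wy w)) ->
  cont_within U Wx z -> cont_within U Wy z -> coords_continuous_2d W z.
Proof.
  intros [d [Hd HU]] H Hcx Hcy c Hc eps.
  destruct (Rabs_coord_le_near U Wx z c Hc Hcx) as [d1 [Hd1 H1]].
  destruct (Rabs_coord_le_near U Wy z c Hc Hcy) as [d2 [Hd2 H2]].
  set (K1 := Rabs (c (Wx z)) + 1). set (K2 := Rabs (c (Wy z)) + 1).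
  assert (HK1 : 1 <= K1) by (unfold K1; pose proof (Rabs_pos (c (Wx z))); lra).
  assert (HK2 : 1 <= K2) by (unfold K2; pose proof (Rabs_pos (c (Wy z))); lra).
  set (rho := Rmin (Rmin d (Rmin (d1/2) (d2/2))) (eps / (2 * (K1 + K2)))).
  assert (Hrho : 0 < rho).
  { unfold rho. repeat apply Rmin_pos; try lra.
    apply Rdiv_lt_0_compat; [apply cond_pos | lra]. }
  assert (Hrho_le : rho <= d /\ rho <= d1/2 /\ rho <= d2/2 /\ rho <= eps / (2 * (K1 + K2))).
  { unfold rho, Rmin; repeat destruct Rle_dec; lra. }
  exists (mkposreal _ Hrho); simpl; intros u v Hu Hv.
  destruct z as [x y]; simpl in *.
  assert (Hhor : Rabs (c (W (u,v)) - c (W (x,v))) <= K1 * Rabs (u - x)).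
  { apply (Rabs_sub_le_derive_bound (fun t => c (W (t,v))) (fun t => c (Wx (t,v)))).
    intros t Ht. pose proof (Rabs_sub_le_segment _ _ _ Ht).
    assert (Ut : U (t,v)) by (apply HU; lra). split.
    - exact (proj1 (H (t,v) Ut) c Hc).
    - apply H1; auto. apply Pdist_lt_box; simpl; lra. }
  assert (Hver : Rabs (c (W (x,v)) - c (W (x,y))) <= K2 * Rabs (v - y)).
  { apply (Rabs_sub_le_derive_bound (fun t => c (W (x,t))) (fun t => c (Wy (x,t)))).
    intros t Ht. pose proof (Rabs_sub_le_segment _ _ _ Ht).
    assert (Ut : U (x,t)) by (apply HU; rewrite ?Rminus_eq_0, ?Rabs_R0; lra). split.
    - exact (proj2 (H (x,t) Ut) c Hc).
    - apply H2; auto. apply Pdist_lt_box; simpl; rewrite ?Rminus_eq_0, ?Rabs_R0; lra. }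
  replace (c (W (u,v)) - c (W (x,y)))
    with ((c (W (u,v)) - c (W (x,v))) + (c (W (x,v)) - c (W (x,y)))) by ring.
  eapply Rle_lt_trans; [apply Rabs_triang|].
  assert (K1 * Rabs (u - x) + K2 * Rabs (v - y) <= (K1 + K2) * rho) by nra.
  assert ((K1 + K2) * rho <= eps / 2).
  { apply Rle_trans with ((K1 + K2) * (eps / (2 * (K1 + K2)))); [nra|].
    right. field. lra. }
  pose proof (cond_pos eps). lra.
Qed.

Lemma solution_coords_continuous A Bc z0 W z :
  is_solution_on A Bc (punctured z0) W -> z <> z0 -> coords_continuous_2d W z.
Proof.
  intros [Wx [Wy H]] Hz.
  apply (coords_continuous_2d_of_partials (punctured z0) W Wx Wy z);
    [apply box_in_punctured; auto | intros w Hw; split; apply H; auto | apply H; auto..].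
Qed.

Lemma coords_continuous_2d_Bl1 W z : coords_continuous_2d W z ->
  forall eta, 0 < eta -> exists del, 0 < del /\ forall u v,
    Rabs (u - fst z) < del -> Rabs (v - snd z) < del -> Bl1 (Bsub (W (u, v)) (W z)) < eta.
Proof.
  intros H eta He.
  assert (He4 : 0 < eta / 4) by lra.
  destruct (H b0 ltac:(simpl; tauto) (mkposreal _ He4)) as [d0 H0].
  destruct (H b1 ltac:(simpl; tauto) (mkposreal _ He4)) as [d1 H1].
  destruct (H b2 ltac:(simpl; tauto) (mkposreal _ He4)) as [d2 H2].
  destruct (H b3 ltac:(simpl; tauto) (mkposreal _ He4)) as [d3 H3].
  set (d := Rmin (Rmin d0 d1) (Rmin d2 d3)).
  exists d; split; [unfold d; repeat apply Rmin_pos; apply cond_pos|].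
  assert (Hd : d <= d0 /\ d <= d1 /\ d <= d2 /\ d <= d3)
    by (unfold d, Rmin; repeat destruct Rle_dec; lra).
  intros u v Hu Hv.
  specialize (H0 u v ltac:(lra) ltac:(lra)). specialize (H1 u v ltac:(lra) ltac:(lra)).
  specialize (H2 u v ltac:(lra) ltac:(lra)). specialize (H3 u v ltac:(lra) ltac:(lra)).
  destruct z as [x y]. unfold Bl1, Bsub, Badd, Bopp; simpl in *.
  unfold Rminus in *. lra.
Qed.

Lemma closed_form_product a b D V z0 z1 :
  is_solution_on a b (punctured z0) D ->
  is_solution_on (fun z => Bopp (a z)) (fun z => Bopp (Bconj (b z))) (punctured z1) V ->
  closed_form_on (off_pts z0 z1) (fun x y => b2 (Bmul (D (x,y)) (V (x,y))))
                                  (fun x y => b0 (Bmul (D (x,y)) (V (x,y)))).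
Proof.
  intros HsD HsV.
  pose proof HsD as [Dx [Dy HD]]. pose proof HsV as [Vx [Vy HV]].
  set (Fx := fun w => Badd (Bmul (Dx w) (V w)) (Bmul (D w) (Vx w))).
  set (Fy := fun w => Badd (Bmul (Dy w) (V w)) (Bmul (D w) (Vy w))).
  exists (fun x y => b2 (Fy (x,y))).
  intros x y [N0 N1].
  destruct (HD (x,y) N0) as (D1 & D2 & D3 & D4 & D5).
  destruct (HV (x,y) N1) as (V1 & V2 & V3 & V4 & V5).
  assert (Hpx := is_derive_coords_mul (fun t => D (t,y)) (fun t => V (t,y)) x _ _ D1 V1).
  assert (Hpy := is_derive_coords_mul (fun t => D (x,t)) (fun t => V (x,t)) y _ _ D2 V2).
  assert (Hbox0 := box_in_punctured (x,y) z0 N0).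
  assert (Hbox1 := box_in_punctured (x,y) z1 N1).
  split; [|split; [|split; [|split]]].
  - eexists; exact (Hpx b2 ltac:(simpl; tauto)).
  - eexists; exact (Hpy b0 ltac:(simpl; tauto)).
  - exact (Hpy b2 ltac:(simpl; tauto)).
  - cbv beta. replace (b2 (Fy (x,y))) with (b0 (Fx (x,y)))
      by (symmetry; exact (product_form_closed _ _ _ _ _ _ _ _ D5 V5)).
    exact (Hpx b0 ltac:(simpl; tauto)).
  - assert (HcFy : coords_continuous_2d Fy (x, y)).
    { unfold Fy; apply coords_continuous_2d_add; apply coords_continuous_2d_mul.
      - exact (coords_continuous_2d_of_cont_within _ _ _ Hbox0 D4).
      - exact (solution_coords_continuous _ _ _ _ _ HsV N1).
      - exact (solution_coords_continuous _ _ _ _ _ HsD N0).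
      - exact (coords_continuous_2d_of_cont_within _ _ _ Hbox1 V4). }
    exact (HcFy b2 ltac:(simpl; tauto)).
Qed.

Definition in_Ci (c : B) : Prop := b2 c = 0 /\ b3 c = 0.

Lemma cont_within_scaled_sub U f g c z : cont_within U f z -> cont_within U g z ->
  cont_within U (fun w => Bmul c (Bsub (f w) (g w))) z.
Proof.
  intros Hf Hg eps He.
  set (e := eps / (16 * (Bl1 c + 1))).
  assert (Hc := Bl1_ge0 c).
  assert (He' : 0 < e) by (apply Rdiv_lt_0_compat; lra).
  destruct (Hf e He') as [d1 [Hd1 H1]]. destruct (Hg e He') as [d2 [Hd2 H2]].
  exists (Rmin d1 d2); split; [apply Rmin_pos; auto|]. intros w Uw Hw.
  specialize (H1 w Uw (Rlt_le_trans _ _ _ Hw (Rmin_l _ _))).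
  specialize (H2 w Uw (Rlt_le_trans _ _ _ Hw (Rmin_r _ _))).
  replace (Bsub (Bmul c (Bsub (f w) (g w))) (Bmul c (Bsub (f z) (g z))))
    with (Bmul c (Bsub (Bsub (f w) (f z)) (Bsub (g w) (g z))))
    by (destruct c, (f w), (f z), (g w), (g z); unfold Bmul, Bsub, Badd, Bopp; simpl;
        f_equal; ring).
  eapply Rle_lt_trans; [apply Bnorm_le_Bl1|].
  eapply Rle_lt_trans; [apply Bl1_mul|].
  assert (HX : Bl1 (Bsub (Bsub (f w) (f z)) (Bsub (g w) (g z))) <= 8 * e).
  { pose proof (Bl1_sub (Bsub (f w) (f z)) (Bsub (g w) (g z))).
    pose proof (Bl1_le_Bnorm (Bsub (f w) (f z))). pose proof (Bl1_le_Bnorm (Bsub (g w) (g z))).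
    lra. }
  pose proof (Bl1_ge0 (Bsub (Bsub (f w) (f z)) (Bsub (g w) (g z)))).
  apply Rle_lt_trans with ((Bl1 c + 1) * (8 * e)); [nra|].
  unfold e. replace ((Bl1 c + 1) * (8 * (eps / (16 * (Bl1 c + 1))))) with (eps / 2)
    by (field; lra).
  lra.
Qed.

Lemma dbar_of_scaled_sub A Bc c X1 Y1 W1 X2 Y2 W2 : in_Ci c ->
  dbar_of X1 Y1 = Badd (Bmul A W1) (Bmul Bc (Bconj W1)) ->
  dbar_of X2 Y2 = Badd (Bmul A W2) (Bmul Bc (Bconj W2)) ->
  dbar_of (Bmul c (Bsub X1 X2)) (Bmul c (Bsub Y1 Y2))
  = Badd (Bmul A (Bmul c (Bsub W1 W2))) (Bmul Bc (Bconj (Bmul c (Bsub W1 W2)))).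
Proof.
  intros [Hc2 Hc3] H1 H2.
  transitivity (Bmul c (Bsub (dbar_of X1 Y1) (dbar_of X2 Y2))).
  - destruct c, X1, Y1, X2, Y2. unfold dbar_of, Bscal, Bmul, Bsub, Badd, Bopp, Bj; simpl.
    f_equal; ring.
  - rewrite H1, H2. destruct c as [c0 c1 c2 c3], A, Bc, W1, W2; simpl in Hc2, Hc3; subst.
    unfold Bmul, Bsub, Badd, Bopp, Bconj; simpl. f_equal; ring.
Qed.

(** Solutions form a [C_i]-module: the equation is [C_i]-linear since [conj] fixes [C_i]. *)
Lemma is_solution_on_scaled_sub A Bc U W1 W2 c : in_Ci c ->
  is_solution_on A Bc U W1 -> is_solution_on A Bc U W2 ->
  is_solution_on A Bc U (fun z => Bmul c (Bsub (W1 z) (W2 z))).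
Proof.
  intros Hc [X1 [Y1 H1]] [X2 [Y2 H2]].
  exists (fun z => Bmul c (Bsub (X1 z) (X2 z))), (fun z => Bmul c (Bsub (Y1 z) (Y2 z))).
  intros z Uz.
  destruct (H1 z Uz) as (Px1 & Py1 & Cx1 & Cy1 & E1).
  destruct (H2 z Uz) as (Px2 & Py2 & Cx2 & Cy2 & E2).
  assert (Hval : forall X Y, Badd (Bmul Bzero X) Y = Y)
    by (intros [] []; unfold Badd, Bmul, Bzero; simpl; f_equal; ring).
  split; [|split; [|split; [|split]]].
  - pose proof (is_derive_coords_mul _ _ _ _ _ (is_derive_coords_const c _)
                  (is_derive_coords_sub _ _ _ _ _ Px1 Px2)) as H.
    rewrite Hval in H. exact H.
  - pose proof (is_derive_coords_mul _ _ _ _ _ (is_derive_coords_const c _)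
                  (is_derive_coords_sub _ _ _ _ _ Py1 Py2)) as H.
    rewrite Hval in H. exact H.
  - apply cont_within_scaled_sub; auto.
  - apply cont_within_scaled_sub; auto.
  - apply dbar_of_scaled_sub; auto.
Qed.

Definition Bl1_kernel_limit (W : Pt -> B) (z0 : Pt) (al : B) : Prop :=
  forall eps, 0 < eps -> exists del, 0 < del /\ forall z, z <> z0 -> Pdist z z0 < del ->
    Bl1 (Bsub (Bmul (Bsub (zB z) (zB z0)) (W z)) al) < eps.

Definition Bl1_decay (W : Pt -> B) : Prop :=
  exists M R0, forall z, R0 < Pabs z -> Pabs z * Bl1 (W z) <= M.

Lemma Bl1_kernel_limit_of W z0 al : kernel_limit W z0 al -> Bl1_kernel_limit W z0 al.
Proof.
  intros H eps He. destruct (H (eps/4) ltac:(lra)) as [d [Hd H1]].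
  exists d; split; auto. intros z Hz Hp. specialize (H1 z Hz Hp).
  pose proof (Bl1_le_Bnorm (Bsub (Bmul (Bsub (zB z) (zB z0)) (W z)) al)). lra.
Qed.

Lemma Pabs_ge0 z : 0 <= Pabs z.
Proof. pose proof (Rabs_coords_le_Pabs z) as [H _]. pose proof (Rabs_pos (fst z)). lra. Qed.

Lemma Bl1_decay_of W : bigO_inv W -> Bl1_decay W.
Proof.
  intros [M [R0 H]]. exists (4 * M), R0. intros z Hz. specialize (H z Hz).
  pose proof (Bl1_le_Bnorm (W z)). pose proof (Pabs_ge0 z).
  apply Rle_trans with (Pabs z * (4 * Bnorm (W z))); [apply Rmult_le_compat_l|]; lra.
Qed.

Lemma Bl1_kernel_limit_scaled_sub W W' z0 al c : Bl1_kernel_limit W z0 al ->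
  Bl1_kernel_limit W' z0 al -> Bl1_kernel_limit (fun z => Bmul c (Bsub (W z) (W' z))) z0 Bzero.
Proof.
  intros H H' eps He.
  set (e := eps / (4 * (Bl1 c + 1))). assert (Hc := Bl1_ge0 c).
  assert (He' : 0 < e) by (apply Rdiv_lt_0_compat; lra).
  destruct (H e He') as [d [Hd H1]]. destruct (H' e He') as [d' [Hd' H1']].
  exists (Rmin d d'); split; [apply Rmin_pos; auto|]. intros z Hz Hp.
  specialize (H1 z Hz (Rlt_le_trans _ _ _ Hp (Rmin_l _ _))).
  specialize (H1' z Hz (Rlt_le_trans _ _ _ Hp (Rmin_r _ _))).
  set (w := Bsub (zB z) (zB z0)) in *.
  replace (Bsub (Bmul w (Bmul c (Bsub (W z) (W' z)))) Bzero)
    with (Bmul c (Bsub (Bsub (Bmul w (W z)) al) (Bsub (Bmul w (W' z)) al)))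
    by (destruct w, c, (W z), (W' z), al; unfold Bmul, Bsub, Badd, Bopp, Bzero; simpl;
        f_equal; ring).
  eapply Rle_lt_trans; [apply Bl1_mul|].
  assert (HX : Bl1 (Bsub (Bsub (Bmul w (W z)) al) (Bsub (Bmul w (W' z)) al)) <= 2 * e)
    by (pose proof (Bl1_sub (Bsub (Bmul w (W z)) al) (Bsub (Bmul w (W' z)) al)); lra).
  pose proof (Bl1_ge0 (Bsub (Bsub (Bmul w (W z)) al) (Bsub (Bmul w (W' z)) al))).
  apply Rle_lt_trans with ((Bl1 c + 1) * (2 * e)); [nra|].
  unfold e. replace ((Bl1 c + 1) * (2 * (eps / (4 * (Bl1 c + 1))))) with (eps / 2)
    by (field; lra).
  lra.
Qed.

Lemma Bl1_decay_scaled_sub W W' c : Bl1_decay W -> Bl1_decay W' ->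
  Bl1_decay (fun z => Bmul c (Bsub (W z) (W' z))).
Proof.
  intros [M [R0 H]] [M' [R0' H']]. exists (Bl1 c * (M + M')), (Rmax R0 R0'). intros z Hz.
  specialize (H z (Rle_lt_trans _ _ _ (Rmax_l _ _) Hz)).
  specialize (H' z (Rle_lt_trans _ _ _ (Rmax_r _ _) Hz)).
  pose proof (Bl1_mul c (Bsub (W z) (W' z))). pose proof (Bl1_sub (W z) (W' z)).
  pose proof (Pabs_ge0 z). pose proof (Bl1_ge0 c).
  apply Rle_trans with (Pabs z * (Bl1 c * (Bl1 (W z) + Bl1 (W' z)))).
  - apply Rmult_le_compat_l; [lra|]. eapply Rle_trans; [eassumption|].
    apply Rmult_le_compat_l; lra.
  - nra.
Qed.

Definition on_square (z : Pt) (r x y : R) : Prop :=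
  Rmax (Rabs (x - fst z)) (Rabs (y - snd z)) = r.

Definition square_integrable (P Q : R -> R -> R) (z : Pt) (r : R) : Prop :=
  ex_RInt (fun x => P x (snd z - r)) (fst z - r) (fst z + r) /\
  ex_RInt (fun x => P x (snd z + r)) (fst z - r) (fst z + r) /\
  ex_RInt (fun y => Q (fst z - r) y) (snd z - r) (snd z + r) /\
  ex_RInt (fun y => Q (fst z + r) y) (snd z - r) (snd z + r).

Lemma on_square_edges z r : 0 < r ->
  (forall x, fst z - r <= x <= fst z + r ->
     on_square z r x (snd z - r) /\ on_square z r x (snd z + r)) /\
  (forall y, snd z - r <= y <= snd z + r ->
     on_square z r (fst z - r) y /\ on_square z r (fst z + r) y).
Proof.
  intros Hr. unfold on_square.
  replace (snd z - r - snd z) with (- r) by ring. replace (snd z + r - snd z) with r by ring.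
  replace (fst z - r - fst z) with (- r) by ring. replace (fst z + r - fst z) with r by ring.
  rewrite Rabs_Ropp, (Rabs_right r) by lra.
  assert (Hin : forall t c, c - r <= t <= c + r -> Rabs (t - c) <= r)
    by (intros; apply Rabs_le; lra).
  split; intros t Ht; split;
    first [ apply Rmax_right; apply Hin; exact Ht | apply Rmax_left; apply Hin; exact Ht ].
Qed.

Lemma square_integrable_closed U P Q z r : closed_form_on U P Q -> 0 < r ->
  (forall x y, on_square z r x y -> U x y) -> square_integrable P Q z r.
Proof.
  intros HF Hr HU. destruct (on_square_edges z r Hr) as [E1 E2].
  repeat split;
    [apply (closed_form_ex_RInt_x U P Q HF) | apply (closed_form_ex_RInt_x U P Q HF)
    | apply (closed_form_ex_RInt_y U P Q HF) | apply (closed_form_ex_RInt_y U P Q HF)];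
    intros t Ht; apply segment_between in Ht; try lra; apply HU;
    [apply E1 | apply E1 | apply E2 | apply E2]; exact Ht.
Qed.

Lemma Rabs_square_integral_le P Q z r K : 0 < r -> square_integrable P Q z r ->
  (forall x y, on_square z r x y -> Rabs (P x y) <= K /\ Rabs (Q x y) <= K) ->
  Rabs (square_integral P Q z r) <= 8 * r * K.
Proof.
  intros Hr (I1 & I2 & I3 & I4) HK. destruct (on_square_edges z r Hr) as [E1 E2].
  assert (Hx : fst z - r <= fst z + r) by lra. assert (Hy : snd z - r <= snd z + r) by lra.
  assert (B1 := abs_RInt_le_const _ _ _ K Hx I1
                  (fun t Ht => proj1 (HK _ _ (proj1 (E1 t Ht))))).
  assert (B2 := abs_RInt_le_const _ _ _ K Hx I2
                  (fun t Ht => proj1 (HK _ _ (proj2 (E1 t Ht))))).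
  assert (B3 := abs_RInt_le_const _ _ _ K Hy I3
                  (fun t Ht => proj2 (HK _ _ (proj1 (E2 t Ht))))).
  assert (B4 := abs_RInt_le_const _ _ _ K Hy I4
                  (fun t Ht => proj2 (HK _ _ (proj2 (E2 t Ht))))).
  unfold square_integral, rect_integral.
  set (a1 := RInt _ _ _) in *. set (a2 := RInt _ _ _) in *.
  set (a3 := RInt _ _ _) in *. set (a4 := RInt _ _ _) in *.
  revert B1 B2 B3 B4. unfold Rabs. repeat destruct Rcase_abs; intros; lra.
Qed.

Lemma RInt_Rminus (f g : R -> R) a b : ex_RInt f a b -> ex_RInt g a b ->
  RInt (fun x => f x - g x) a b = RInt f a b - RInt g a b.
Proof. intros Hf Hg. exact (RInt_minus (V:=R_CompleteNormedModule) f g a b Hf Hg). Qed.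

Lemma square_integral_minus P Q P' Q' z r :
  square_integrable P Q z r -> square_integrable P' Q' z r ->
  square_integrable (fun x y => P x y - P' x y) (fun x y => Q x y - Q' x y) z r /\
  square_integral (fun x y => P x y - P' x y) (fun x y => Q x y - Q' x y) z r
  = square_integral P Q z r - square_integral P' Q' z r.
Proof.
  intros (I1 & I2 & I3 & I4) (J1 & J2 & J3 & J4). split.
  - repeat split; apply (ex_RInt_minus (V:=R_NormedModule)); auto.
  - unfold square_integral, rect_integral.
    cbv beta.
    rewrite (RInt_Rminus (fun x => P x _) (fun x => P' x _) _ _ I1 J1),
      (RInt_Rminus (fun x => P x _) (fun x => P' x _) _ _ I2 J2),
      (RInt_Rminus (fun y => Q _ y) (fun y => Q' _ y) _ _ I3 J3),
      (RInt_Rminus (fun y => Q _ y) (fun y => Q' _ y) _ _ I4 J4).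
    ring.
Qed.

Lemma RInt_Poisson_edge k s p r : 0 < r ->
  RInt (fun x => (s * (x - p) + k * r) / ((x - p) * (x - p) + r * r)) (p - r) (p + r)
  = k * (PI / 2).
Proof.
  intros Hr.
  assert (Hpos : forall x, 0 < (x - p) * (x - p) + r * r)
    by (intro x; pose proof (Rle_0_sqr (x - p)); unfold Rsqr in *; nra).
  apply is_RInt_unique.
  set (f := fun x => s * ln ((x - p) * (x - p) + r * r) / 2 + k * atan ((x - p) / r)).
  replace (k * (PI / 2)) with (minus (f (p + r)) (f (p - r))).
  - apply (is_RInt_derive (V:=R_CompleteNormedModule) f).
    + intros x _. unfold f. auto_derive.
      * pose proof (Hpos x); lra.
      * pose proof (Hpos x).
        assert (E : 1 + (x + - p) * / r * ((x + - p) * / r * 1) = ((x-p)*(x-p)+r*r)/(r*r))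
          by (field; lra).
        rewrite E. field. lra.
    + intros x _. apply (ex_derive_continuous (K:=R_AbsRing) (V:=R_NormedModule)).
      auto_derive. pose proof (Hpos x); lra.
  - unfold f, minus, plus, opp; simpl.
    replace (p + r - p) with r by ring. replace (p - r - p) with (- r) by ring.
    replace (- r * - r) with (r * r) by ring.
    replace (r / r) with 1 by (field; lra). replace (- r / r) with (- 1) by (field; lra).
    replace (atan (-1)) with (- atan 1) by (rewrite <- atan_opp; f_equal; lra).
    rewrite atan_1. field.
Qed.

(** The form of the pure pole [(z - p)^-1 c]. *)
Definition pole_P (p : Pt) (c : B) (x y : R) : R := b2 (Bmul (Binv_pt (x - fst p) (y - snd p)) c).
Definition pole_Q (p : Pt) (c : B) (x y : R) : R := b0 (Bmul (Binv_pt (x - fst p) (y - snd p)) c).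

Lemma square_integral_pole p c r : 0 < r ->
  square_integral (pole_P p c) (pole_Q p c) p r = 2 * PI * b0 c.
Proof.
  intros Hr. destruct c as [c0 c1 c2 c3].
  assert (Hne : forall u, u * u + r * r <> 0)
    by (intro u; pose proof (Rle_0_sqr u); unfold Rsqr in *; nra).
  unfold square_integral, rect_integral, pole_P, pole_Q.
  rewrite (RInt_ext _ (fun x => (c2 * (x - fst p) + c0 * r) / ((x - fst p) * (x - fst p) + r * r)))
    by (intros x _; unfold Binv_pt, Bmul; simpl; specialize (Hne (x - fst p));
        field; replace (snd p - r - snd p) with (- r) by ring; lra).
  rewrite (RInt_ext (fun x => _ (Bmul (Binv_pt _ (snd p + r - snd p)) _))
             (fun x => (c2 * (x - fst p) + - c0 * r) / ((x - fst p) * (x - fst p) + r * r)))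
    by (intros x _; unfold Binv_pt, Bmul; simpl; specialize (Hne (x - fst p));
        replace (snd p + r - snd p) with r by ring; field; lra).
  rewrite (RInt_ext (fun y => _ (Bmul (Binv_pt (fst p + r - fst p) _) _))
             (fun y => (c2 * (y - snd p) + c0 * r) / ((y - snd p) * (y - snd p) + r * r)))
    by (intros y _; unfold Binv_pt, Bmul; simpl; specialize (Hne (y - snd p));
        replace (fst p + r - fst p) with r by ring; field; lra).
  rewrite (RInt_ext (fun y => _ (Bmul (Binv_pt (fst p - r - fst p) _) _))
             (fun y => (c2 * (y - snd p) + - c0 * r) / ((y - snd p) * (y - snd p) + r * r)))
    by (intros y _; unfold Binv_pt, Bmul; simpl; specialize (Hne (y - snd p));
        replace (fst p - r - fst p) with (- r) by ring; field; lra).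
  rewrite !RInt_Poisson_edge by exact Hr. simpl. field.
Qed.

Lemma square_integrable_pole p c r : 0 < r -> square_integrable (pole_P p c) (pole_Q p c) p r.
Proof.
  intros Hr. destruct c as [c0 c1 c2 c3].
  unfold square_integrable, pole_P, pole_Q.
  repeat split; apply (ex_RInt_continuous (V:=R_CompleteNormedModule)); intros t _;
  apply (ex_derive_continuous (K:=R_AbsRing) (V:=R_NormedModule));
  unfold Binv_pt, Bmul; simpl; auto_derive;
  repeat split; intro Hz; pose proof (Rle_0_sqr (t + - fst p)); pose proof (Rle_0_sqr (t + - snd p));
  unfold Rsqr in *; nra.
Qed.

Lemma on_square_ne z w r x y : on_square z r x y ->
  Rmax (Rabs (fst w - fst z)) (Rabs (snd w - snd z)) <> r -> (x, y) <> w.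
Proof. unfold on_square. intros Ho Hw E. subst w. simpl in Hw. contradiction. Qed.

Lemma on_square_ne_center z r x y : 0 < r -> on_square z r x y -> (x, y) <> z.
Proof.
  intros Hr Ho. apply (on_square_ne z z r x y Ho).
  rewrite !Rminus_eq_0, Rabs_R0, Rmax_left; lra.
Qed.

Lemma on_square_sum_sq_neq0 z r x y : 0 < r -> on_square z r x y ->
  (x - fst z) * (x - fst z) + (y - snd z) * (y - snd z) <> 0.
Proof.
  intros Hr Ho E. apply (on_square_ne_center z r x y Hr Ho).
  destruct (Rplus_sqr_eq_0 _ _ E) as [E1 E2]. destruct z; simpl in *. f_equal; lra.
Qed.

Lemma on_square_Pdist z r x y : on_square z r x y -> Pdist (x, y) z <= 2 * r.
Proof.
  unfold on_square. intros Ho. eapply Rle_trans; [apply Pdist_le|]. simpl.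
  pose proof (Rmax_l (Rabs (x - fst z)) (Rabs (y - snd z))).
  pose proof (Rmax_r (Rabs (x - fst z)) (Rabs (y - snd z))). lra.
Qed.

Lemma on_square_origin_Pabs r x y : on_square (0, 0) r x y -> r <= Pabs (x, y).
Proof.
  unfold on_square; simpl. rewrite !Rminus_0_r. intros <-.
  destruct (Rabs_coords_le_Pabs (x, y)). apply Rmax_lub; auto.
Qed.

Lemma Bl1_le_on_square X z r x y : 0 < r -> on_square z r x y ->
  Bl1 X <= 2 / r * Bl1 (Bmul (Bsub (zB (x, y)) (zB z)) X).
Proof.
  intros Hr Ho. rewrite zB_sub. simpl.
  rewrite <- (Binv_ptK _ _ X (on_square_sum_sq_neq0 z r x y Hr Ho)) at 1.
  eapply Rle_trans; [apply Bl1_mul|]. apply Rmult_le_compat_r; [apply Bl1_ge0|].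
  apply Bl1_Binv_pt; [exact Hr | unfold on_square in Ho; lra].
Qed.

Lemma Bl1_sub_pole_le X Y X1 al z r x y : 0 < r -> on_square z r x y ->
  Bl1 (Bsub (Bmul X Y) (Bmul (Binv_pt (x - fst z) (y - snd z)) (Bmul X1 al)))
  <= 2 / r * (Bl1 X * Bl1 (Bsub (Bmul (Bsub (zB (x, y)) (zB z)) Y) al) + Bl1 (Bsub X X1) * Bl1 al).
Proof.
  intros Hr Ho.
  eapply Rle_trans; [apply (Bl1_le_on_square _ z r x y Hr Ho)|].
  apply Rmult_le_compat_l; [apply Rlt_le, Rdiv_lt_0_compat; lra|].
  replace (Bmul (Bsub (zB (x, y)) (zB z))
                (Bsub (Bmul X Y) (Bmul (Binv_pt (x - fst z) (y - snd z)) (Bmul X1 al))))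
    with (Badd (Bmul X (Bsub (Bmul (Bsub (zB (x, y)) (zB z)) Y) al)) (Bmul (Bsub X X1) al)).
  - eapply Rle_trans; [apply Bl1_add|]. apply Rplus_le_compat; apply Bl1_mul.
  - assert (Hne := on_square_sum_sq_neq0 z r x y Hr Ho).
    rewrite zB_sub. destruct X, Y, X1, al. unfold Binv_pt, Bmul, Bsub, Badd, Bopp; simpl.
    f_equal; field; exact Hne.
Qed.

Lemma Bl1_le_of_decay W M R0 r z : (forall z, R0 < Pabs z -> Pabs z * Bl1 (W z) <= M) ->
  0 < r -> R0 < r -> r <= Pabs z -> Bl1 (W z) <= Rabs M / r.
Proof.
  intros H Hr HR0 Hz. specialize (H z ltac:(lra)).
  pose proof (Rle_abs M). pose proof (Bl1_ge0 (W z)).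
  apply Rle_trans with (Rabs M / Pabs z).
  - apply Rmult_le_reg_l with (Pabs z); [lra|]. field_simplify; lra.
  - unfold Rdiv. apply Rmult_le_compat_l; [apply Rabs_pos|]. apply Rinv_le_contravar; lra.
Qed.

Lemma eq0_of_Rabs_le_all x : (forall eps, 0 < eps -> Rabs x <= eps) -> x = 0.
Proof.
  intros H. destruct (Req_dec x 0) as [E|E]; auto.
  assert (Hp : 0 < Rabs x) by (apply Rabs_pos_lt; auto).
  specialize (H (Rabs x / 2) ltac:(lra)). lra.
Qed.

Section Pairing.

Variables (a b D V : Pt -> B) (z0 z1 : Pt).
Hypothesis solD : is_solution_on a b (punctured z0) D.
Hypothesis solV :
  is_solution_on (fun z => Bopp (a z)) (fun z => Bopp (Bconj (b z))) (punctured z1) V.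
Hypothesis z10 : z1 <> z0.

Let P x y := b2 (Bmul (D (x, y)) (V (x, y))).
Let Q x y := b0 (Bmul (D (x, y)) (V (x, y))).
Let sep := Rmax (Rabs (fst z0 - fst z1)) (Rabs (snd z0 - snd z1)).
Let closedPQ : closed_form_on (off_pts z0 z1) P Q := closed_form_product a b D V z0 z1 solD solV.

Lemma sep_gt0 : 0 < sep.
Proof. apply sup_dist_gt0. congruence. Qed.

Lemma square_integrable_PQ z r : z = z0 \/ z = z1 -> 0 < r < sep / 2 ->
  square_integrable P Q z r.
Proof.
  intros Hz Hr. pose proof sep_gt0.
  apply (square_integrable_closed _ P Q z r closedPQ); [lra|].
  intros x y Ho. destruct Hz as [->| ->]; split.
  - apply (on_square_ne_center _ r); [lra | exact Ho].
  - apply (on_square_ne z0 z1 r x y Ho).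
    rewrite (Rabs_minus_sym (fst z1)), (Rabs_minus_sym (snd z1)). fold sep; lra.
  - apply (on_square_ne z1 z0 r x y Ho). fold sep; lra.
  - apply (on_square_ne_center _ r); [lra | exact Ho].
Qed.

Let Rbig := Rabs (fst z0) + Rabs (snd z0) + Rabs (fst z1) + Rabs (snd z1) + sep.

Lemma square_integral_decompose r0 r1 R :
  0 < r0 < sep / 2 -> 0 < r1 < sep / 2 -> Rbig < R ->
  square_integral P Q (0, 0) R = square_integral P Q z0 r0 + square_integral P Q z1 r1.
Proof.
  intros Hr0 Hr1 HR. unfold Rbig in HR.
  assert (Hb : forall u, - Rabs u <= u <= Rabs u)
    by (intro u; pose proof (Rle_abs u); pose proof (Rle_abs (- u)); rewrite Rabs_Ropp in *; lra).
  pose proof (Hb (fst z0)); pose proof (Hb (snd z0)); pose proof (Hb (fst z1)); pose proof (Hb (snd z1)).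
  apply (rect_integral_two_squares z0 z1 P Q _ _ _ _ r0 r1 closedPQ);
    simpl; try (fold sep); lra.
Qed.

Lemma square_integral_near_z0 : Bl1_kernel_limit D z0 Bzero ->
  forall eps, 0 < eps -> exists r, 0 < r < sep / 2 /\ Rabs (square_integral P Q z0 r) <= eps.
Proof.
  intros HkD eps He. pose proof sep_gt0.
  assert (HcV : coords_continuous_2d V z0)
    by (apply (solution_coords_continuous _ _ z1 V z0 solV); auto).
  destruct (coords_continuous_2d_Bl1 V z0 HcV 1 Rlt_0_1) as [dV [HdV HV1]].
  set (KV := Bl1 (V z0) + 1).
  assert (HKV : 0 < KV) by (unfold KV; pose proof (Bl1_ge0 (V z0)); lra).
  destruct (HkD (eps / (16 * KV)) ltac:(apply Rdiv_lt_0_compat; lra)) as [dD [HdD HD1]].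
  set (r := Rmin (sep / 4) (Rmin (dV / 2) (dD / 4))).
  assert (Hr : 0 < r /\ r <= sep / 4 /\ r <= dV / 2 /\ r <= dD / 4)
    by (unfold r, Rmin; repeat destruct Rle_dec; lra).
  exists r; split; [lra|].
  replace eps with (8 * r * (2 / r * (eps / (16 * KV)) * KV)) by (field; lra).
  apply Rabs_square_integral_le; [lra | apply square_integrable_PQ; auto; lra|].
  intros x y Ho.
  assert (HD : Bl1 (D (x, y)) <= 2 / r * (eps / (16 * KV))).
  { eapply Rle_trans; [apply (Bl1_le_on_square _ z0 r x y); [lra | exact Ho]|].
    apply Rmult_le_compat_l; [apply Rlt_le, Rdiv_lt_0_compat; lra|].
    rewrite <- Bl1_sub0. apply Rlt_le, HD1; [apply (on_square_ne_center _ r); [lra | exact Ho]|].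
    pose proof (on_square_Pdist _ _ _ _ Ho); lra. }
  assert (HV : Bl1 (V (x, y)) <= KV).
  { unfold on_square in Ho. pose proof (Rmax_l (Rabs (x - fst z0)) (Rabs (y - snd z0))).
    pose proof (Rmax_r (Rabs (x - fst z0)) (Rabs (y - snd z0))).
    pose proof (Bl1_le_sub (V (x, y)) (V z0)). pose proof (HV1 x y ltac:(lra) ltac:(lra)).
    unfold KV; lra. }
  apply Rabs_b2_b0_le_Bl1. eapply Rle_trans; [apply Bl1_mul|].
  apply Rmult_le_compat; auto; apply Bl1_ge0.
Qed.

Lemma square_integral_far : Bl1_decay D -> Bl1_decay V ->
  forall eps, 0 < eps -> exists R, Rbig < R /\ Rabs (square_integral P Q (0, 0) R) <= eps.
Proof.
  intros [MD [RD HMD]] [MV [RV HMV]] eps He. pose proof sep_gt0.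
  set (M := Rabs MD * Rabs MV).
  assert (HM : 0 <= M) by (unfold M; apply Rmult_le_pos; apply Rabs_pos).
  assert (HM2 : 0 <= 8 * M / eps) by (apply Rmult_le_pos; [lra | apply Rlt_le, Rinv_0_lt_compat; lra]).
  set (R := Rbig + Rabs RD + Rabs RV + 1 + 8 * M / eps).
  pose proof (Rle_abs RD); pose proof (Rle_abs RV).
  pose proof (Rabs_pos RD); pose proof (Rabs_pos RV).
  pose proof (Rabs_pos (fst z0)); pose proof (Rabs_pos (snd z0));
    pose proof (Rabs_pos (fst z1)); pose proof (Rabs_pos (snd z1)).
  assert (HR : 0 < R) by (unfold R, Rbig; lra).
  exists R; split; [unfold R, Rbig in *; lra|].
  apply Rle_trans with (8 * R * (M / (R * R))).
  - apply Rabs_square_integral_le; auto.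
    + apply (square_integrable_closed _ P Q (0, 0) R closedPQ HR).
      intros x y Ho. split; [apply (on_square_ne (0, 0) z0 R x y Ho) | apply (on_square_ne (0, 0) z1 R x y Ho)];
        simpl; rewrite !Rminus_0_r; apply Rlt_not_eq, Rmax_lub_lt;
        unfold R, Rbig; lra.
    + intros x y Ho. pose proof (on_square_origin_Pabs R x y Ho).
      assert (HD : Bl1 (D (x, y)) <= Rabs MD / R)
        by (apply (Bl1_le_of_decay D MD RD); auto; unfold R, Rbig; lra).
      assert (HV : Bl1 (V (x, y)) <= Rabs MV / R)
        by (apply (Bl1_le_of_decay V MV RV); auto; unfold R, Rbig; lra).
      apply Rabs_b2_b0_le_Bl1. eapply Rle_trans; [apply Bl1_mul|].
      replace (M / (R * R)) with ((Rabs MD / R) * (Rabs MV / R)) by (unfold M; field; lra).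
      apply Rmult_le_compat; auto; apply Bl1_ge0.
  - replace (8 * R * (M / (R * R))) with (8 * M / R) by (field; lra).
    apply (Rmult_le_reg_l R); [lra|].
    replace (R * (8 * M / R)) with (eps * (8 * M / eps)) by (field; lra).
    rewrite (Rmult_comm R). apply Rmult_le_compat_l; [lra|]. unfold R, Rbig in *; lra.
Qed.

Lemma square_integral_z1_eq0 : Bl1_kernel_limit D z0 Bzero -> Bl1_decay D -> Bl1_decay V ->
  forall r, 0 < r < sep / 2 -> square_integral P Q z1 r = 0.
Proof.
  intros HkD HdD HdV r Hr. apply eq0_of_Rabs_le_all. intros eps He.
  destruct (square_integral_near_z0 HkD (eps / 2) ltac:(lra)) as [r0 [Hr0 H0]].
  destruct (square_integral_far HdD HdV (eps / 2) ltac:(lra)) as [R [HR HR']].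
  rewrite (square_integral_decompose r0 r R Hr0 Hr HR) in HR'.
  revert H0 HR'. generalize (square_integral P Q z0 r0) (square_integral P Q z1 r).
  intros i0 i1. unfold Rabs. repeat destruct Rcase_abs; lra.
Qed.

(** Near [z1], [D V] is [(z - z1)^-1 D(z1) α] up to an [o(|z - z1|^-1)] error. *)
Lemma square_integral_near_z1 al : Bl1_kernel_limit V z1 al ->
  forall eps, 0 < eps -> exists r, 0 < r < sep / 2 /\
    Rabs (square_integral P Q z1 r - 2 * PI * b0 (Bmul (D z1) al)) <= eps.
Proof.
  intros HkV eps He. pose proof sep_gt0.
  set (c := Bmul (D z1) al).
  assert (HcD : coords_continuous_2d D z1)
    by (apply (solution_coords_continuous _ _ z0 D z1 solD); auto).
  set (K := Bl1 (D z1) + 1 + Bl1 al).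
  assert (HK : 0 < K) by (unfold K; pose proof (Bl1_ge0 (D z1)); pose proof (Bl1_ge0 al); lra).
  set (e := eps / (16 * K)).
  assert (He' : 0 < e) by (unfold e; apply Rdiv_lt_0_compat; lra).
  destruct (coords_continuous_2d_Bl1 D z1 HcD (Rmin 1 e) ltac:(apply Rmin_pos; lra))
    as [dD [HdD HD1]].
  destruct (HkV e He') as [dV [HdV HV1]].
  set (r := Rmin (sep / 4) (Rmin (dD / 2) (dV / 4))).
  assert (Hr : 0 < r /\ r <= sep / 4 /\ r <= dD / 2 /\ r <= dV / 4)
    by (unfold r, Rmin; repeat destruct Rle_dec; lra).
  exists r; split; [lra|].
  destruct (square_integral_minus P Q (pole_P z1 c) (pole_Q z1 c) z1 r
              (square_integrable_PQ z1 r (or_intror eq_refl) ltac:(lra))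
              (square_integrable_pole z1 c r ltac:(lra))) as [Hint Hdiff].
  rewrite square_integral_pole in Hdiff by lra. rewrite <- Hdiff.
  replace eps with (8 * r * (2 / r * (K * e))) by (unfold e; field; lra).
  apply Rabs_square_integral_le; [lra | exact Hint|].
  intros x y Ho. set (w := Bsub (zB (x, y)) (zB z1)).
  assert (Hnear : Rabs (x - fst z1) <= r /\ Rabs (y - snd z1) <= r)
    by (unfold on_square in Ho; split; rewrite <- Ho; [apply Rmax_l | apply Rmax_r]).
  assert (HD : Bl1 (Bsub (D (x, y)) (D z1)) < Rmin 1 e) by (apply HD1; lra).
  assert (HV : Bl1 (Bsub (Bmul w (V (x, y))) al) < e).
  { apply HV1; [apply (on_square_ne_center _ r); [lra | exact Ho]|].
    pose proof (on_square_Pdist _ _ _ _ Ho); lra. }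
  pose proof (Rmin_l 1 e). pose proof (Rmin_r 1 e).
  pose proof (Bl1_le_sub (D (x, y)) (D z1)).
  pose proof (Bl1_ge0 al). pose proof (Bl1_ge0 (D (x, y))).
  pose proof (Bl1_ge0 (Bsub (Bmul w (V (x, y))) al)).
  pose proof (Bl1_ge0 (Bsub (D (x, y)) (D z1))).
  apply (Rabs_b2_b0_le_Bl1
           (Bsub (Bmul (D (x, y)) (V (x, y))) (Bmul (Binv_pt (x - fst z1) (y - snd z1)) c))).
  eapply Rle_trans; [exact (Bl1_sub_pole_le _ _ (D z1) al z1 r x y ltac:(lra) Ho)|].
  apply Rmult_le_compat_l; [apply Rlt_le, Rdiv_lt_0_compat; lra|]. fold w. unfold K. nra.
Qed.

Lemma pairing_residue_eq0 al : Bl1_kernel_limit D z0 Bzero -> Bl1_decay D ->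
  Bl1_kernel_limit V z1 al -> Bl1_decay V -> b0 (Bmul (D z1) al) = 0.
Proof.
  intros HkD HdD HkV HdV. pose proof PI_RGT_0.
  apply eq0_of_Rabs_le_all. intros eps He.
  destruct (square_integral_near_z1 al HkV (2 * PI * eps) ltac:(nra)) as [r [Hr Hres]].
  rewrite (square_integral_z1_eq0 HkD HdD HdV r Hr), Rminus_0_l, Rabs_Ropp, !Rabs_mult in Hres.
  rewrite (Rabs_right 2), (Rabs_right PI) in Hres by lra.
  apply (Rmult_le_reg_l (2 * PI)); nra.
Qed.

End Pairing.

Definition Bi : B := mkB 0 1 0 0.

Lemma kernel_difference_vanishes a b W W' V1 Vj z0 z1 al :
  is_solution_on a b (punctured z0) W -> is_solution_on a b (punctured z0) W' ->
  kernel_limit W z0 al -> kernel_limit W' z0 al -> bigO_inv W -> bigO_inv W' ->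
  is_solution_on (fun z => Bopp (a z)) (fun z => Bopp (Bconj (b z))) (punctured z1) V1 ->
  is_solution_on (fun z => Bopp (a z)) (fun z => Bopp (Bconj (b z))) (punctured z1) Vj ->
  kernel_limit V1 z1 Bone -> kernel_limit Vj z1 Bj -> bigO_inv V1 -> bigO_inv Vj ->
  z1 <> z0 -> W z1 = W' z1.
Proof.
  intros sW sW' kW kW' dW dW' sV1 sVj kV1 kVj dV1 dVj Hne.
  assert (Hres : forall c V be, in_Ci c ->
            is_solution_on (fun z => Bopp (a z)) (fun z => Bopp (Bconj (b z))) (punctured z1) V ->
            kernel_limit V z1 be -> bigO_inv V ->
            b0 (Bmul (Bmul c (Bsub (W z1) (W' z1))) be) = 0).
  { intros c V be Hc sV kV dV.
    eapply (pairing_residue_eq0 a b (fun z => Bmul c (Bsub (W z) (W' z))) V z0 z1); auto.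
    - apply is_solution_on_scaled_sub; auto.
    - apply (Bl1_kernel_limit_scaled_sub _ _ _ al); apply Bl1_kernel_limit_of; auto.
    - apply Bl1_decay_scaled_sub; apply Bl1_decay_of; auto.
    - apply Bl1_kernel_limit_of; auto.
    - apply Bl1_decay_of; auto. }
  (* [c = 1, i] and [be = 1, j] give the four coordinates of [W z1 - W' z1]. *)
  assert (H1 : in_Ci Bone) by (split; reflexivity).
  assert (Hi : in_Ci Bi) by (split; reflexivity).
  pose proof (Hres Bone V1 Bone H1 sV1 kV1 dV1). pose proof (Hres Bi V1 Bone Hi sV1 kV1 dV1).
  pose proof (Hres Bone Vj Bj H1 sVj kVj dVj). pose proof (Hres Bi Vj Bj Hi sVj kVj dVj).
  destruct (W z1), (W' z1). unfold Bmul, Bsub, Badd, Bopp, Bone, Bi, Bj in *; simpl in *.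
  f_equal; lra.
Qed.

Lemma unique_decaying_kernel_of_adjoint a b :
  (exists V1 Vj, decaying_kernel (fun z => Bopp (a z)) (fun z => Bopp (Bconj (b z))) V1 Vj) ->
  unique_decaying_kernel a b.
Proof.
  intros [V1 [Vj [HKV HBV]]] Z1 Zj Z1' Zj' [HK HB] [HK' HB'] z0 z Hz.
  destruct (HK z0) as (s1 & sj & k1 & kj). destruct (HK' z0) as (s1' & sj' & k1' & kj').
  destruct (HKV z) as (v1 & vj & l1 & lj).
  destruct (HB z0), (HB' z0), (HBV z).
  split; [apply (kernel_difference_vanishes a b (Z1 z0) (Z1' z0) (V1 z) (Vj z) z0 z Bone)
         | apply (kernel_difference_vanishes a b (Zj z0) (Zj' z0) (V1 z) (Vj z) z0 z Bj)]; auto.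
Qed.

(** The Hölder hypotheses are needed only for the existence of kernels. *)
Theorem mainTheorem5 (a b : Pt -> B) :
  holder a -> holder b ->
  (exists Z1 Zj, decaying_kernel a b Z1 Zj) ->
  (exists V1 Vj, decaying_kernel (fun z => Bopp (a z)) (fun z => Bopp (Bconj (b z))) V1 Vj) ->
  unique_decaying_kernel a b /\
  unique_decaying_kernel (fun z => Bopp (a z)) (fun z => Bopp (Bconj (b z))).
Proof.
  intros _ _ HZ HV. split.
  - exact (unique_decaying_kernel_of_adjoint a b HV).
  - apply unique_decaying_kernel_of_adjoint.
    replace (fun z => Bopp (Bopp (a z))) with a
      by (apply functional_extensionality; intro z; destruct (a z); unfold Bopp; simpl;
          f_equal; ring).
    replace (fun z => Bopp (Bconj (Bopp (Bconj (b z))))) with b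
      by (apply functional_extensionality; intro z; destruct (b z); unfold Bopp, Bconj; simpl;
          f_equal; ring).
    exact HZ.
Qed.
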